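(* Let $L\ge 18$ be even. Then \[ M_S(L,3)\le\begin{cases}\lfloor (L+4)/8\rfloor & \text{if } L\equiv 0 \pmod{12},\\ \lfloor (L+2)/8\rfloor & \text{if } L\equiv 4,6,8 \pmod{12},\\ \lfloor L/8\rfloor & \text{if } L\equiv 2,10 \pmod{12}.\end{cases} \]
   Context: $\mathcal{P}(L,\omega)$ is the set of $\omega$-element subsets of $\mathbb{Z}_L$. For $\mathcal{I}\in\mathcal{P}(L,\omega)$: $d(\mathcal{I})=\{a-b \bmod L: a,b\in\mathcal{I}\}$, $d^*(\mathcal{I})=d(\mathcal{I})\setminus\{0\}$. A strongly conflict-avoiding code (SCAC) of length $L$ and weight $\omega$ is a set $\mathcal{C}=\{\mathcal{I}_1,\dots,\mathcal{I}_M\}\subseteq\mathcal{P}(L,\omega)$ such that for all $j\ne k$, $\big(d^*(\mathcal{I}_j)\cup(d^*(\mathcal{I}_j)+1)\cup(d^*(\mathcal{I}_j)-1)\big)\cap d(\mathcal{I}_k)=\emptyset$ (shifts mod $L$). $M_S(L,\omega)$ denotes the maximum number of codewords in an SCAC of length $L$ and weight $\omega$. *)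

From mathcomp Require Import all_boot.
Set Implicit Arguments. Unset Strict Implicit. Unset Printing Implicit Defensive.

(* Z_L is represented by 'I_L (residues 0..L-1); arithmetic is done mod L on nat. *)

Definition dset (L : nat) (I : {set 'I_L}) (x : nat) : bool :=
  [exists a in I, exists b in I, x == (a + L - b) %% L].

Definition dstar (L : nat) (I : {set 'I_L}) (x : nat) : bool :=
  (x != 0) && dset I x.

Definition sc_compatible (L : nat) (Ij Ik : {set 'I_L}) : bool :=
  [forall x : 'I_L, dstar Ij x ==>
     [&& ~~ dset Ik x, ~~ dset Ik ((x + 1) %% L) & ~~ dset Ik ((x + L - 1) %% L)]].

Definition is_SCAC (L w : nat) (C : {set {set 'I_L}}) : Prop :=
  (forall I, I \in C -> #|I| = w) /\
  (forall Ij Ik, Ij \in C -> Ik \in C -> Ij != Ik -> sc_compatible Ij Ik).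

Definition scac3_bound (L : nat) : nat :=
  if L %% 12 == 0 then (L + 4) %/ 8
  else if (L %% 12 == 4) || (L %% 12 == 6) || (L %% 12 == 8) then (L + 2) %/ 8
  else L %/ 8.

From mathcomp Require Import all_boot.
From mathcomp Require Import zify.
Set Implicit Arguments. Unset Strict Implicit. Unset Printing Implicit Defensive.

(* For a codeword I let E(I) = d*(I) ∪ (d*(I) + 1).  Strong conflict avoidance makes
   the sets E(I) of distinct codewords disjoint and keeps 1 and L - 1 out of every
   d*(I), so all E(I) lie in {2, ..., L - 1}.  If I = {p < q < r} has cyclic gaps
   a, b, c, then d*(I) = {a, b, c, a + b, b + c, c + a}, and E(I) has at least 8
   elements unless the gaps are nearly equal or of shape (a, a, 2a); then E(I)
   contains L/3 or L/4 instead.  Giving these two residues extra weight, every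
   codeword weighs at least 8, whence 8 |C| <= L - 2 + (extra weight), which is
   the bound in each residue class of L mod 12. *)

Lemma modn_diff L u v : u < L -> v < L ->
  (u + L - v) %% L = if v <= u then u - v else u + L - v.
Proof.
move=> uL vL; case: leqP => vu; last by rewrite modn_small; lia.
by rewrite (_ : u + L - v = u - v + L) ?modnDr ?modn_small; lia.
Qed.

Lemma card_sum_mem (T : finType) (A : {set T}) : #|A| = \sum_x (x \in A).
Proof. by rewrite -sum1_card big_mkcond; apply: eq_bigr => x _; case: (x \in A). Qed.

Lemma sum_ord_ge2 n : \sum_(i < n) (2 <= i) = n - 2.
Proof. by elim: n => [|n IHn]; rewrite ?big_ord0 // big_ord_recr /= IHn; case: leqP; lia. Qed.

Lemma exists_val_mem L (A : {set 'I_L}) k (kL : k < L) :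
  [exists x in A, val x == k] = (Ordinal kL \in A).
Proof.
apply/existsP/idP => [[x /andP[xA /eqP xk]]|kA]; last by exists (Ordinal kL); rewrite kA /=.
by rewrite (_ : Ordinal kL = x) //; apply: val_inj.
Qed.

Lemma card_ge_seq L (A : {set 'I_L}) (P : pred nat) (s : seq nat) :
  (forall x : 'I_L, (x \in A) = P x) -> uniq s -> all (fun x => (x < L) && P x) s ->
  size s <= #|A|.
Proof.
move=> HA us sA; have sL : all (fun x => x < L) s by apply: sub_all sA => x /andP[].
have <- : size (pmap insub s : seq 'I_L) = size s.
  by rewrite size_pmap_sub; apply/eqP; rewrite -all_count.
rewrite cardE; apply: uniq_leq_size; first exact: pmap_sub_uniq.
by move=> y; rewrite mem_pmap_sub mem_enum HA => /(allP sA)/andP[].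
Qed.

Lemma card3_sorted L (I : {set 'I_L}) : #|I| = 3 ->
  exists p q r : 'I_L, [/\ p < q, q < r & I = [set p; q; r]].
Proof.
move=> I3; have /card_gt2P[x [y [z [[xI yI zI] [xy yz zx]]]]] : 2 < #|I| by rewrite I3.
have -> : I = [set x; y; z].
  apply/eqP; rewrite eq_sym eqEcard I3; apply/andP; split.
    by apply/subsetP => w; rewrite !inE => /orP[/orP[]|] /eqP->.
  by apply/card_gt2P; exists x, y, z; rewrite !inE !eqxx !orbT.
have sorted_set (p q r : 'I_L) : p < q -> q < r -> [set x; y; z] = [set p; q; r] ->
    exists p q r : 'I_L, [/\ p < q, q < r & [set x; y; z] = [set p; q; r]].
  by move=> pq qr e; exists p, q, r.
have ltn_neq (u v : 'I_L) : u != v -> u < v \/ v < u.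
  move=> uv; case: ltngtP => [||/val_inj eq_uv]; [by left | by right |].
  by rewrite eq_uv eqxx in uv.
have [xy'|yx'] := ltn_neq _ _ xy.
all: have [yz'|zy'] := ltn_neq _ _ yz.
all: have [zx'|xz'] := ltn_neq _ _ zx.
all: first [ lia | apply: (sorted_set x y z); [lia|lia|]
   | apply: (sorted_set x z y); [lia|lia|] | apply: (sorted_set y x z); [lia|lia|]
   | apply: (sorted_set y z x); [lia|lia|] | apply: (sorted_set z x y); [lia|lia|]
   | apply: (sorted_set z y x); [lia|lia|] ].
all: by apply/setP => w; rewrite !inE; case: (w == x); case: (w == y); case: (w == z).
Qed.

Definition gap_diffs (a b c : nat) : seq nat := [:: a; b; c; a + b; b + c; a + c].

Definition gap_ext (a b c x : nat) : bool :=
  (x \in gap_diffs a b c) || (0 < x) && (x.-1 \in gap_diffs a b c).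

Lemma gap_diffsC12 a b c : gap_diffs a b c =i gap_diffs b a c.
Proof.
move=> x; rewrite !inE (addnC b a).
by case: (x == a); case: (x == b); case: (x == c); case: (x == a + b);
  case: (x == b + c); case: (x == a + c).
Qed.

Lemma gap_diffsC23 a b c : gap_diffs a b c =i gap_diffs a c b.
Proof.
move=> x; rewrite !inE (addnC c b).
by case: (x == a); case: (x == b); case: (x == c); case: (x == a + b);
  case: (x == b + c); case: (x == a + c).
Qed.

Lemma gap_ext_eq_mem a b c a' b' c' :
  gap_diffs a b c =i gap_diffs a' b' c' -> gap_ext a b c =1 gap_ext a' b' c'.
Proof. by move=> eqD x; rewrite /gap_ext !eqD. Qed.

(* The gaps of [p < q < r] around the cycle are [q - p], [r - q] and [L - r + p]. *)
Lemma dset3 L (p q r : 'I_L) x : p < q -> q < r -> x < L ->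
  dset [set p; q; r] x = (x == 0) || (x \in gap_diffs (q - p) (r - q) (L - r + p)).
Proof.
move=> pq qr xL; have pL := ltn_ord p; have qL := ltn_ord q; have rL := ltn_ord r.
rewrite /dset !inE; apply/existsP/idP.
  case=> u /andP[]; rewrite !inE => /orP[/orP[]|] /eqP-> /existsP[v /andP[]];
  by rewrite !inE => /orP[/orP[]|] /eqP-> /eqP->; rewrite modn_diff //; case: leqP; lia.
have diff_in u v : u \in [set p; q; r] -> v \in [set p; q; r] -> x = (u + L - v) %% L ->
    exists u0, (u0 \in [set p; q; r]) && [exists w in [set p; q; r], x == (u0 + L - w) %% L].
  by move=> Hu Hv Hx; exists u; rewrite Hu; apply/existsP; exists v; rewrite Hv Hx eqxx.
move=> /orP[/eqP Hx|/orP[/eqP Hx|/orP[/eqP Hx|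
         /orP[/eqP Hx|/orP[/eqP Hx|/orP[/eqP Hx|/eqP Hx]]]]]].
- by apply: (diff_in p p); rewrite ?inE ?eqxx ?orbT // modn_diff //; case: leqP; lia.
- by apply: (diff_in q p); rewrite ?inE ?eqxx ?orbT // modn_diff //; case: leqP; lia.
- by apply: (diff_in r q); rewrite ?inE ?eqxx ?orbT // modn_diff //; case: leqP; lia.
- by apply: (diff_in p r); rewrite ?inE ?eqxx ?orbT // modn_diff //; case: leqP; lia.
- by apply: (diff_in r p); rewrite ?inE ?eqxx ?orbT // modn_diff //; case: leqP; lia.
- by apply: (diff_in p q); rewrite ?inE ?eqxx ?orbT // modn_diff //; case: leqP; lia.
- by apply: (diff_in q r); rewrite ?inE ?eqxx ?orbT // modn_diff //; case: leqP; lia.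
Qed.

Definition dext L (I : {set 'I_L}) : {set 'I_L} :=
  [set x : 'I_L | dstar I x || dstar I ((x + L - 1) %% L)].

Lemma dext3 L (p q r x : 'I_L) : p < q -> q < r ->
  2 <= q - p -> 2 <= r - q -> 2 <= L - r + p ->
  (x \in dext [set p; q; r]) = gap_ext (q - p) (r - q) (L - r + p) x.
Proof.
move=> pq qr ha hb hc; have xL := ltn_ord x; have rL := ltn_ord r.
rewrite inE /dstar !dset3 ?ltn_pmod //; try lia.
set D := gap_diffs _ _ _; have D0 : 0 \notin D by rewrite !inE; lia.
have nz0 z : (z != 0) && ((z == 0) || (z \in D)) = (z \in D).
  by case: eqP => [->|] //; rewrite (negbTE D0).
rewrite !nz0 /gap_ext; have [->|xpos] := posnP x.
  have DN1 : L - 1 \notin D by rewrite !inE; lia.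
  by rewrite add0n modn_small ?(negbTE DN1) ?(negbTE D0) //; lia.
by rewrite (_ : x + L - 1 = x.-1 + L) ?modnDr ?modn_small ?xpos //; lia.
Qed.

Lemma mem_dset0 L (I : {set 'I_L}) x : x \in I -> dset I 0.
Proof.
move=> xI; apply/existsP; exists x; rewrite xI; apply/existsP; exists x.
by rewrite xI addKn modnn.
Qed.

(* Extra weight for containing L/3 or (when 4 | L) L/4.  By disjointness at most one
   codeword earns each, and the weights make every codeword weigh at least 8. *)
Definition bonus L (A : {set 'I_L}) : nat :=
  (if 3 %| L then 4 else 2) * [exists x in A, val x == L %/ 3] +
  2 * ((4 %| L) && [exists x in A, val x == L %/ 4]).

Ltac solve_bool :=
  match goal with
  | |- is_true (_ || _) => apply/orP; first [left; solve_bool | right; solve_bool]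
  | |- is_true (_ && _) => apply/andP; split; solve_bool
  | |- is_true (~~ (_ || _)) => rewrite negb_or; solve_bool
  | |- is_true (_ == _) => apply/eqP; lia
  | |- _ => lia
  end.

Section GapBound.

Variables (L a b c : nat) (A : {set 'I_L}).
Hypotheses (HA : forall x : 'I_L, (x \in A) = gap_ext a b c x)
  (a_ge2 : 2 <= a) (le_ab : a <= b) (le_bc : b <= c) (sum_abc : a + b + c = L)
  (L_even : ~~ odd L).

Ltac count_ext s :=
  apply: (@card_ge_seq L A _ s HA); rewrite /= /gap_ext !inE; solve_bool.

Lemma exists_val_ext k : k < L -> gap_ext a b c k -> [exists x in A, val x == k].
Proof. by move=> kL Pk; rewrite exists_val_mem HA. Qed.

Lemma bonus_third : gap_ext a b c (L %/ 3) -> (if 3 %| L then 4 else 2) <= bonus A.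
Proof.
by move=> /(@exists_val_ext (L %/ 3) (ltac:(lia))) e3; rewrite /bonus e3 muln1 leq_addr.
Qed.

Lemma bonus_quarter : 4 %| L -> gap_ext a b c (L %/ 4) -> 2 <= bonus A.
Proof.
by move=> L4 /(@exists_val_ext (L %/ 4) (ltac:(lia))) e4; rewrite /bonus e4 L4 muln1 leq_addl.
Qed.

Lemma gap_bound_spread : a + 2 <= b -> 8 <= #|A| + bonus A.
Proof.
move=> ab2; apply: leq_trans (leq_addr _ _).
by count_ext [:: a; a.+1; b; b.+1; a + c; (a + c).+1; b + c; (b + c).+1].
Qed.

Lemma gap_bound_pair : b <= a.+1 -> b + 2 <= c -> 8 <= #|A| + bonus A.
Proof.
move=> ba bc2; have [ab|ab] : b = a.+1 \/ b = a by lia.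
  apply: leq_trans (leq_addr _ _).
  by count_ext [:: a; a.+1; a.+2; c; c.+1; a + c; (a + c).+1; (a + c).+2].
case: (eqVneq c (a + a)) => [c2a|c2a].
  (* the gaps [a, a, 2a] make [L = 4a] *)
  have : 2 <= bonus A by apply: bonus_quarter; [apply/dvdnP; exists a|
    rewrite /gap_ext !inE (_ : L %/ 4 = a)]; solve_bool.
  suff : 6 <= #|A| by lia.
  by count_ext [:: a; a.+1; c; c.+1; a + c; (a + c).+1].
(* [c = 2a + 1] would make [L] odd *)
have := odd_double_half L; rewrite (negbTE L_even) add0n => L_double.
apply: leq_trans (leq_addr _ _).
by count_ext [:: a; a.+1; c; c.+1; a + a; (a + a).+1; a + c; (a + c).+1].
Qed.

Lemma gap_bound_near_equal : b <= a.+1 -> c <= b.+1 -> 8 <= #|A| + bonus A.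
Proof.
move=> ba cb; have third : L %/ 3 = a -> (if 3 %| L then 4 else 2) <= bonus A.
  by move=> e; apply: bonus_third; rewrite e /gap_ext !inE; solve_bool.
have [ab|ab] : b = a \/ b = a.+1 by lia.
all: have [bc|bc] : c = b \/ c = b.+1 by lia.
- have := third (ltac:(lia)); have -> : 3 %| L by lia.
  suff : 4 <= #|A| by lia.
  by count_ext [:: a; a.+1; a + a; (a + a).+1].
- have := third (ltac:(lia)); suff : 6 <= #|A| by case: ifP; lia.
  by count_ext [:: a; a.+1; a.+2; a + a; (a + a).+1; (a + a).+2].
- have := third (ltac:(lia)); suff : 6 <= #|A| by case: ifP; lia.
  by count_ext [:: a; a.+1; a.+2; (a + a).+1; (a + a).+2; (a + a).+3].
- apply: leq_trans (leq_addr _ _).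
  by count_ext [:: a; a.+1; a.+2; a.+3; (a + a).+1; (a + a).+2; (a + a).+3; (a + a).+4].
Qed.

Lemma gap_bound_sorted : 8 <= #|A| + bonus A.
Proof.
have [ab2|ba] := leqP (a + 2) b; first exact: gap_bound_spread.
have [bc2|cb] := leqP (b + 2) c; first by apply: gap_bound_pair; lia.
by apply: gap_bound_near_equal; lia.
Qed.

End GapBound.

Lemma gap_bound L a b c (A : {set 'I_L}) :
  (forall x : 'I_L, (x \in A) = gap_ext a b c x) -> 2 <= a -> 2 <= b -> 2 <= c ->
  a + b + c = L -> ~~ odd L -> 8 <= #|A| + bonus A.
Proof.
move=> HA ha hb hc sum_abc L_even.
have C12 := gap_ext_eq_mem (gap_diffsC12 _ _ _).
have C23 := gap_ext_eq_mem (gap_diffsC23 _ _ _).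
have [ab|ba] := leqP a b; have [bc|cb] := leqP b c; have [ac|ca] := leqP a c.
- exact: (@gap_bound_sorted L a b c).
- lia.
- by apply: (@gap_bound_sorted L a c b); try lia; move=> x; rewrite HA C23.
- by apply: (@gap_bound_sorted L c a b); try lia; move=> x; rewrite HA C23 C12.
- by apply: (@gap_bound_sorted L b a c); try lia; move=> x; rewrite HA C12.
- by apply: (@gap_bound_sorted L b c a); try lia; move=> x; rewrite HA C12 C23.
- lia.
- by apply: (@gap_bound_sorted L c b a); try lia; move=> x; rewrite HA C23 C12 C23.
Qed.

Lemma dext_bound L (I : {set 'I_L}) : ~~ odd L -> #|I| = 3 -> ~~ dstar I 1 ->
  8 <= #|dext I| + bonus (dext I).
Proof.
move=> L_even I3; have [p [q [r [pq qr ->]]]] := card3_sorted I3.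
have rL := ltn_ord r; rewrite /dstar dset3 // ?inE //=; last lia.
move=> /norP[ne_a /norP[ne_b /norP[ne_c _]]].
apply: (@gap_bound L (q - p) (r - q) (L - r + p)); try lia.
by move=> x; apply: dext3; lia.
Qed.

Section StronglyConflictAvoidingCode.

Variables (L : nat) (C : {set {set 'I_L}}).
Hypotheses (C_SCAC : is_SCAC 3 C) (C_gt1 : 1 < #|C|) (L_gt1 : 1 < L).

Lemma codeword_card I : I \in C -> #|I| = 3.
Proof. by case: C_SCAC => card3 _ /card3. Qed.

Lemma codeword_other I : I \in C -> exists2 J, J \in C & J != I.
Proof.
move=> IC; have /card_gt1P[u [v [uC vC uv]]] := C_gt1.
by have [uI|] := eqVneq u I; [exists v; rewrite // -uI eq_sym | exists u].
Qed.

Lemma codeword_conflict I J x : I \in C -> J \in C -> I != J -> x < L -> dstar I x ->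
  [&& ~~ dset J x, ~~ dset J ((x + 1) %% L) & ~~ dset J ((x + L - 1) %% L)].
Proof.
case: C_SCAC => _ compat IC JC IJ xL.
by move/forallP: (compat I J IC JC IJ) => /(_ (Ordinal xL)) /implyP.
Qed.

Lemma codeword_dset0 J : J \in C -> dset J 0.
Proof.
move=> /codeword_card J3; have /card_gt0P[x xJ] : 0 < #|J| by rewrite J3.
exact: mem_dset0 xJ.
Qed.

Lemma codeword_dstar1 I : I \in C -> ~~ dstar I 1.
Proof.
move=> IC; have [J JC JI] := codeword_other IC; apply/negP => dI.
have IJ : I != J by rewrite eq_sym.
have /and3P[_ _] := codeword_conflict IC JC IJ L_gt1 dI.
by rewrite addKn modnn codeword_dset0.
Qed.

Lemma codeword_dstarN1 I : I \in C -> ~~ dstar I (L - 1).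
Proof.
move=> IC; have [J JC JI] := codeword_other IC; apply/negP => dI.
have IJ : I != J by rewrite eq_sym.
have /and3P[_ + _] := codeword_conflict IC JC IJ (ltac:(lia) : L - 1 < L) dI.
by rewrite subnK ?modnn ?codeword_dset0 //; lia.
Qed.

Lemma dext_disjoint I J x : I \in C -> J \in C -> I != J ->
  x \in dext I -> x \notin dext J.
Proof.
move=> IC JC IJ; have JI : J != I by rewrite eq_sym.
have conflictIJ := codeword_conflict IC JC IJ; have conflictJI := codeword_conflict JC IC JI.
have yL : (x + L - 1) %% L < L by rewrite ltn_pmod //; lia.
rewrite !inE => dI; apply/negP => dJ; case/orP: dI => dI; case/orP: dJ => dJ.
- by have /and3P[/negP []] := conflictIJ x (ltn_ord x) dI; case/andP: dJ.
- by have /and3P[_ _ /negP []] := conflictIJ x (ltn_ord x) dI; case/andP: dJ.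
- by have /and3P[_ _ /negP []] := conflictJI x (ltn_ord x) dJ; case/andP: dI.
- by have /and3P[/negP []] := conflictIJ _ yL dI; case/andP: dJ.
Qed.

Lemma dext_ge2 I (x : 'I_L) : I \in C -> x \in dext I -> 2 <= x.
Proof.
move=> IC; rewrite inE; have [//|x_lt2] := leqP 2 x.
have [->|->] : x = 0 :> nat \/ x = 1 :> nat by lia.
  rewrite add0n modn_small; last lia.
  by rewrite (negbTE (codeword_dstarN1 IC)) /dstar eqxx.
by rewrite addKn modnn (negbTE (codeword_dstar1 IC)) /dstar eqxx.
Qed.

Lemma sum_mem_dext (x : 'I_L) : \sum_(I in C) (x \in dext I) <= (2 <= x).
Proof.
have [I0 /andP[I0C xI0]|none] := pickP [pred I in C | x \in dext I]; last first.
  by rewrite big1 // => I IC; move: (none I); rewrite /= IC /= => ->.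
rewrite (bigD1 I0) //= xI0 big1 ?addn0 ?(dext_ge2 I0C xI0) // => J /andP[JC JI0].
by rewrite (negbTE (dext_disjoint I0C JC _ xI0)) // eq_sym.
Qed.

Lemma sum_card_dext : \sum_(I in C) #|dext I| <= L - 2.
Proof.
rewrite (eq_bigr _ (fun I _ => card_sum_mem (dext I))) exchange_big /= -sum_ord_ge2.
by apply: leq_sum => x _; apply: sum_mem_dext.
Qed.

Lemma sum_bonus_dext :
  \sum_(I in C) bonus (dext I) <= (if 3 %| L then 4 else 2) + 2 * (4 %| L).
Proof.
have sum_val_le1 k : k < L -> \sum_(I in C) [exists x in dext I, val x == k] <= 1.
  move=> kL; under eq_bigr do rewrite exists_val_mem.
  exact: leq_trans (sum_mem_dext _) (leq_b1 _).
rewrite /bonus big_split -!big_distrr /= leq_add //.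
  by rewrite -[X in _ <= X]muln1 leq_mul2l sum_val_le1 ?orbT //; lia.
rewrite leq_mul2l; case: (4 %| L) => /=; last by rewrite big1.
by rewrite sum_val_le1 ?orbT //; lia.
Qed.

End StronglyConflictAvoidingCode.

Lemma leq_scac3_bound L n : ~~ odd L ->
  8 * n <= L - 2 + ((if 3 %| L then 4 else 2) + 2 * (4 %| L)) -> n <= scac3_bound L.
Proof.
move=> L_even; rewrite /scac3_bound.
by case: (boolP (4 %| L)) => ?; case: ifP => ?; case: ifP => ?; try case: ifP => ?; lia.
Qed.

Theorem mainTheorem6 (L : nat) (hL : 18 <= L) (hev : ~~ odd L)
  (C : {set {set 'I_L}}) (hC : is_SCAC 3 C) :
  #|C| <= scac3_bound L.
Proof.
apply: (leq_scac3_bound hev).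
have [C_le1|C_gt1] := leqP #|C| 1; first by apply: leq_trans (leq_addr _ _); lia.
have L_gt1 : 1 < L by lia.
apply: leq_trans (leq_add (sum_card_dext hC C_gt1 L_gt1) (sum_bonus_dext hC C_gt1 L_gt1)).
rewrite -big_split /= mulnC -sum_nat_const; apply: leq_sum => I IC.
exact: dext_bound hev (codeword_card hC IC) (codeword_dstar1 hC C_gt1 L_gt1 IC).
Qed.
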